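(* Every translation from limit-deterministic Büchi automata to deterministic parity automata produces, in the worst case, for input LDBAs with $n$ states, output automata with $2^{\Omega(n\log n)}$ states.
   Context: A limit-deterministic Büchi automaton (LDBA) is a nondeterministic Büchi automaton $(Q,q_0,\Sigma,\delta,\alpha)$ together with $Q_d\subseteq Q$ such that all accepting transitions are within $Q_d$, the transition relation is deterministic on $Q_d$, and $Q_d$ is closed under successors. A deterministic parity automaton has a deterministic transition function and a coloring of transitions by positive integers; a word is accepted iff the minimal color seen infinitely often on its run is even. A translation maps each LDBA to a DPA recognizing the same language. *)

From mathcomp Require Import all_boot.
Set Implicit Arguments. Unset Strict Implicit. Unset Printing Implicit Defensive.

Definition word (Sigma : finType) := nat -> Sigma.

Record LDBA (Sigma : finType) := {
  lstate : finType;
  linit : lstate;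
  ltrans : lstate -> Sigma -> {set lstate};
  lacc : lstate -> Sigma -> lstate -> bool;
  lQd : {set lstate};
  lacc_trans : forall q a q', lacc q a q' -> q' \in ltrans q a;
  lacc_Qd : forall q a q', lacc q a q' -> (q \in lQd) && (q' \in lQd);
  lQd_det : forall q a, q \in lQd -> #|ltrans q a| <= 1;
  lQd_closed : forall q a q', q \in lQd -> q' \in ltrans q a -> q' \in lQd
}.

Definition ldba_run (Sigma : finType) (A : LDBA Sigma) (w : word Sigma)
    (r : nat -> lstate A) : Prop :=
  r 0 = linit A /\ forall i, r i.+1 \in ltrans (r i) (w i).

Arguments ldba_run {Sigma} A w r.

Definition ldba_accepting_run (Sigma : finType) (A : LDBA Sigma) (w : word Sigma)
    (r : nat -> lstate A) : Prop :=
  forall i, exists2 j, i <= j & lacc (r j) (w j) (r j.+1).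

Arguments ldba_accepting_run {Sigma} A w r.

Definition ldba_accepts (Sigma : finType) (A : LDBA Sigma) (w : word Sigma) : Prop :=
  exists r, ldba_run A w r /\ ldba_accepting_run A w r.

Record DPA (Sigma : finType) := {
  dstate : finType;
  dinit : dstate;
  dtrans : dstate -> Sigma -> dstate;
  dcol : dstate -> Sigma -> nat;
  dcol_pos : forall q a, 0 < dcol q a
}.

Fixpoint dpa_run (Sigma : finType) (D : DPA Sigma) (w : word Sigma) (i : nat) : dstate D :=
  match i with
  | 0 => dinit D
  | i'.+1 => dtrans (dpa_run D w i') (w i')
  end.

Arguments dpa_run {Sigma} D w i.

Definition dpa_color (Sigma : finType) (D : DPA Sigma) (w : word Sigma) (i : nat) : nat :=
  dcol (dpa_run D w i) (w i).

Definition dpa_accepts (Sigma : finType) (D : DPA Sigma) (w : word Sigma) : Prop :=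
  exists m,
    ~~ odd m /\
    (forall i, exists2 j, i <= j & dpa_color D w j = m) /\
    (exists i, forall j, i <= j -> m <= dpa_color D w j).

Definition translation :=
  forall Sigma : finType, LDBA Sigma -> DPA Sigma.

Definition correct_translation (T : translation) : Prop :=
  forall (Sigma : finType) (A : LDBA Sigma) (w : word Sigma),
    ldba_accepts A w <-> dpa_accepts (T Sigma A) w.

From mathcomp Require Import all_boot zify.
Set Implicit Arguments. Unset Strict Implicit. Unset Printing Implicit Defensive.

(* The witness LDBA has states None (initial) and Some j for j < m, over the
   letters inl j ("kill j") and inr j ("good for j"): None guesses some j, and
   Some j dies on inl j and accepts on inr j.  So it accepts the words in which,
   for some j, inr j occurs infinitely often and inl j only finitely often.

   Let D be an equivalent DPA and K a set of indices.  For each i outside K,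
   the letters with index outside K except inl i lead, from any reachable state,
   into a bottom SCC of D.  No state lies in such SCCs for two indices i <> i':
   looping through both gives a lasso whose colour set is the union of two
   accepting ones, so D accepts it, whereas its alphabet contains inl j along
   with every inr j, so the LDBA rejects it.  Recursing into these disjoint SCCs
   with K + i gives #|~: K|! reachable states, hence D has at least m! states,
   and m! ^ 4 >= (m + 1) ^ (m + 1). *)

Section UltimatelyPeriodicWords.
Variables (Sigma : finType) (a0 : Sigma) (p l : seq Sigma).

Definition upword : word Sigma :=
  fun i => if i < size p then nth a0 p i else nth a0 l ((i - size p) %% size l).

Definition inf_often (w : word Sigma) (a : Sigma) := forall i, exists2 t, i <= t & w t = a.
Definition fin_often (w : word Sigma) (a : Sigma) := exists i, forall t, i <= t -> w t != a.

Lemma upword_prefix i : i < size p -> upword i = nth a0 p i.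
Proof. by rewrite /upword => ->. Qed.

Lemma upword_loop k : upword (size p + k) = nth a0 l (k %% size l).
Proof. by rewrite /upword ltnNge leq_addr addKn. Qed.

Hypothesis l_neq0 : 0 < size l.

Lemma upword_loop_index k t : t < size l -> upword (size p + (k * size l + t)) = nth a0 l t.
Proof. by move=> ltl; rewrite upword_loop modnMDl modn_small. Qed.

Lemma leq_upword_loop_index i t : i <= size p + (i * size l + t).
Proof. by rewrite (leq_trans _ (leq_addl _ _)) // (leq_trans _ (leq_addr _ _)) // leq_pmulr. Qed.

Lemma mem_upword_loop t : size p <= t -> upword t \in l.
Proof. by move=> /subnKC <-; rewrite upword_loop mem_nth ?ltn_pmod. Qed.

Lemma inf_often_upword a : inf_often upword a <-> a \in l.
Proof.
split=> [/(_ (size p)) [t /mem_upword_loop + <-] // | la i].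
exists (size p + (i * size l + index a l)); first exact: leq_upword_loop_index.
by rewrite upword_loop_index ?nth_index ?index_mem.
Qed.

Lemma fin_often_upword a : fin_often upword a <-> a \notin l.
Proof.
split=> [[i not_a] | Nla].
  by apply/negP => /inf_often_upword /(_ i) [t /not_a /eqP].
by exists (size p) => t /mem_upword_loop; apply: contraTneq => ->.
Qed.

End UltimatelyPeriodicWords.

Definition even_min (s : seq nat) :=
  exists2 c, c \in s & ~~ odd c /\ {in s, forall c', c <= c'}.

Lemma even_min_cat s1 s2 : even_min s1 -> even_min s2 -> even_min (s1 ++ s2).
Proof.
move=> [c1 s1c1 [even_c1 min_c1]] [c2 s2c2 [even_c2 min_c2]].
exists (minn c1 c2); first by rewrite mem_cat /minn; case: ifP; rewrite ?s1c1 ?s2c2 ?orbT.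
split; first by rewrite /minn; case: ifP.
by move=> c; rewrite mem_cat geq_min => /orP [/min_c1 -> | /min_c2 ->]; rewrite ?orbT.
Qed.

Section DPAFiniteWords.
Variables (Sigma : finType) (D : DPA Sigma).

Definition dpa_read (x : dstate D) (u : seq Sigma) : dstate D := foldl (@dtrans _ D) x u.

Fixpoint dpa_colors (x : dstate D) (u : seq Sigma) : seq nat :=
  if u is a :: u' then dcol x a :: dpa_colors (dtrans x a) u' else [::].

Lemma dpa_read_cat x u v : dpa_read x (u ++ v) = dpa_read (dpa_read x u) v.
Proof. exact: foldl_cat. Qed.

Lemma dpa_read_take_succ (a0 : Sigma) x u t : t < size u ->
  dpa_read x (take t.+1 u) = dtrans (dpa_read x (take t u)) (nth a0 u t).
Proof. by move=> ltu; rewrite (take_nth a0 ltu) /dpa_read foldl_rcons. Qed.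

Lemma dpa_colors_cat x u v :
  dpa_colors x (u ++ v) = dpa_colors x u ++ dpa_colors (dpa_read x u) v.
Proof. by elim: u x => //= a u IHu x; rewrite IHu. Qed.

Lemma size_dpa_colors x u : size (dpa_colors x u) = size u.
Proof. by elim: u x => //= a u IHu x; rewrite IHu. Qed.

Lemma nth_dpa_colors (a0 : Sigma) x u t : t < size u ->
  nth 0 (dpa_colors x u) t = dcol (dpa_read x (take t u)) (nth a0 u t).
Proof. by elim: u x t => //= a u IHu x [|t] //= /IHu ->. Qed.

Section Lasso.
Variables (a0 : Sigma) (p l : seq Sigma) (x : dstate D).
Hypotheses (read_p : dpa_read (dinit D) p = x) (read_l : dpa_read x l = x)
  (l_neq0 : 0 < size l).

Lemma dpa_run_upword_prefix i : i <= size p ->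
  dpa_run D (upword a0 p l) i = dpa_read (dinit D) (take i p).
Proof.
elim: i => [|i IHi] lei /=; first by rewrite take0.
by rewrite IHi ?(ltnW lei) // (dpa_read_take_succ a0) // upword_prefix.
Qed.

Lemma dpa_run_upword_loop k :
  dpa_run D (upword a0 p l) (size p + k) = dpa_read x (take (k %% size l) l).
Proof.
elim: k => [|k IHk].
  by rewrite addn0 mod0n take0 dpa_run_upword_prefix // take_size read_p.
rewrite addnS /= IHk.
have lt_k := ltn_pmod k l_neq0.
have -> : k.+1 %% size l = (k %% size l).+1 %% size l by rewrite -addn1 -modnDml addn1.
rewrite upword_loop -(dpa_read_take_succ a0) //.
case: (ltngtP (k %% size l).+1 (size l)) => [lt_l|gt_l|->].
- by rewrite (modn_small lt_l).
- by rewrite ltnNge lt_k in gt_l.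
- by rewrite modnn take0 take_size.
Qed.

Lemma dpa_color_upword_loop k :
  dpa_color D (upword a0 p l) (size p + k) = nth 0 (dpa_colors x l) (k %% size l).
Proof.
by rewrite /dpa_color dpa_run_upword_loop (nth_dpa_colors a0) ?ltn_pmod ?upword_loop.
Qed.

Lemma dpa_accepts_upword :
  dpa_accepts D (upword a0 p l) <-> even_min (dpa_colors x l).
Proof.
have col := dpa_color_upword_loop.
have size_cols : size (dpa_colors x l) = size l by rewrite size_dpa_colors.
have index_cols c : c \in dpa_colors x l -> index c (dpa_colors x l) < size l.
  by rewrite -size_cols index_mem.
split=> [[c [even_c [inf_c [i0 ge_c]]]] | [c col_c [even_c min_c]]].
  exists c; last split=> // c' col_c'.
    have [t /subnKC <-] := inf_c (size p).
    by rewrite col => <-; rewrite mem_nth // size_cols ltn_pmod.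
  have := ge_c _ (leq_upword_loop_index p l_neq0 i0 (index c' (dpa_colors x l))).
  by rewrite col modnMDl modn_small ?index_cols // nth_index.
exists c; split=> //; split.
  move=> i; exists (size p + (i * size l + index c (dpa_colors x l))).
    exact: leq_upword_loop_index.
  by rewrite col modnMDl modn_small ?index_cols // nth_index.
by exists (size p) => j /subnKC <-; rewrite col min_c // mem_nth // size_cols ltn_pmod.
Qed.

End Lasso.

Lemma dpa_accepts_upword_cat a0 p l1 l2 x :
  dpa_read (dinit D) p = x -> dpa_read x l1 = x -> dpa_read x l2 = x ->
  0 < size l1 -> 0 < size l2 ->
  dpa_accepts D (upword a0 p l1) -> dpa_accepts D (upword a0 p l2) ->
  dpa_accepts D (upword a0 p (l1 ++ l2)).
Proof.
move=> read_p read_l1 read_l2 l1_neq0 l2_neq0.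
have read_l12 : dpa_read x (l1 ++ l2) = x by rewrite dpa_read_cat read_l1.
have l12_neq0 : 0 < size (l1 ++ l2) by rewrite size_cat addn_gt0 l1_neq0.
rewrite !(dpa_accepts_upword a0 read_p) // dpa_colors_cat read_l1.
exact: even_min_cat.
Qed.

End DPAFiniteWords.

Section Recurrence.
Variables (T : finType) (e : rel T).

Definition recurrent (x : T) := [forall z, connect e x z ==> connect e z x].

Lemma recurrent_connect x z : recurrent x -> connect e x z -> recurrent z.
Proof.
move=> /forallP rec_x xz; apply/forallP => y; apply/implyP => zy.
by apply: connect_trans (implyP (rec_x y) (connect_trans xz zy)) xz.
Qed.

Lemma exists_recurrent q : exists x, connect e q x && recurrent x.
Proof.
have [n] := ubnP #|[set z | connect e q z]|; elim: n q => // n IHn q lt_n.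
case rec_q: (recurrent q); first by exists q; rewrite connect0.
move: rec_q => /negbT; rewrite negb_forall => /existsP [z].
rewrite negb_imply => /andP [qz Nzq].
have [|x /andP [zx rec_x]] := IHn z; last by exists x; rewrite rec_x (connect_trans qz zx).
rewrite -ltnS (leq_trans _ lt_n) // ltnS; apply: proper_card; apply/properP; split.
  by apply/subsetP => y; rewrite !inE; apply: connect_trans.
by exists q; rewrite !inE ?connect0.
Qed.

End Recurrence.

Section DPAGraph.
Variables (Sigma : finType) (D : DPA Sigma).

Definition dpa_edge (A : {set Sigma}) : rel (dstate D) :=
  fun y z => [exists a in A, dtrans y a == z].

Lemma connect_dpa_read A y z :
  connect (dpa_edge A) y z -> exists2 u, {subset u <= A} & dpa_read y u = z.
Proof.
move=> /connectP [s]; elim: s y => [|y' s IHs] y /=; first by exists [::].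
case/andP => /existsP [a /andP [Aa /eqP <-]] ys zs.
have [u uA read_u] := IHs _ ys zs; exists (a :: u) => //.
by move=> b; rewrite inE => /predU1P [-> // | /uA].
Qed.

Lemma connect_dpa_edge_sub (A B : {set Sigma}) y z :
  A \subset B -> connect (dpa_edge A) y z -> connect (dpa_edge B) y z.
Proof.
move=> sAB; apply: connect_sub => u v /existsP [a /andP [Aa uv]].
by apply: connect1; apply/existsP; exists a; rewrite (subsetP sAB).
Qed.

Lemma recurrent_dpa_loop A x :
  recurrent (dpa_edge A) x -> exists2 l : seq Sigma, l =i A & dpa_read x l = x.
Proof.
move=> /forallP rec_x.
suff loop : forall s : seq Sigma, {subset s <= A} ->
    exists l : seq Sigma, [/\ {subset l <= A}, {subset s <= l} & dpa_read x l = x].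
  have [|l [lA sl read_l]] := loop (enum A); first by move=> a; rewrite mem_enum.
  by exists l => // a; apply/idP/idP => [/lA // | Aa]; apply: sl; rewrite mem_enum.
elim => [|a s IHs] sA; first by exists [::]; split.
have [l [lA sl read_l]] := IHs (fun b sb => sA b (mem_behead (s := a :: s) sb)).
have Aa : a \in A by apply: sA; rewrite mem_head.
have x_a : connect (dpa_edge A) x (dtrans x a).
  by apply: connect1; apply/existsP; exists a; rewrite Aa /=.
have [u uA read_u] := connect_dpa_read (implyP (rec_x _) x_a).
exists (a :: u ++ l); split.
- by move=> b; rewrite inE mem_cat => /or3P [/eqP -> | /uA | /lA].
- move=> b; rewrite inE => /predU1P [-> | /sl bl]; first exact: mem_head.
  by rewrite inE mem_cat bl !orbT.
- by rewrite -[dpa_read x _]/(dpa_read (dtrans x a) (u ++ l)) dpa_read_cat read_u read_l.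
Qed.

End DPAGraph.

Arguments dpa_edge {Sigma} D A.

Section WitnessLDBA.
Variable m : nat.

Definition letter : finType := ('I_m + 'I_m)%type.

Definition letter_index (a : letter) : 'I_m := match a with inl j | inr j => j end.

Definition witness_trans (q : option 'I_m) (a : letter) : {set option 'I_m} :=
  if q is Some j then (if a == inl j then set0 else [set q]) else setT.

Definition witness_acc (q : option 'I_m) (a : letter) (q' : option 'I_m) : bool :=
  if q is Some j then (q' == q) && (a == inr j) else false.

Definition witness_Qd : {set option 'I_m} := [set q | q != None].

Lemma witness_acc_trans q a q' : witness_acc q a q' -> q' \in witness_trans q a.
Proof. by case: q => [j|] //= /andP [/eqP -> /eqP ->]; rewrite set11. Qed.

Lemma witness_acc_Qd q a q' :
  witness_acc q a q' -> (q \in witness_Qd) && (q' \in witness_Qd).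
Proof. by case: q => [j|] //= /andP [/eqP ->]; rewrite inE. Qed.

Lemma witness_Qd_det q a : q \in witness_Qd -> #|witness_trans q a| <= 1.
Proof.
case: q => [j _|]; last by rewrite inE.
by rewrite /=; case: ifP; rewrite ?cards0 ?cards1.
Qed.

Lemma witness_Qd_closed q a q' :
  q \in witness_Qd -> q' \in witness_trans q a -> q' \in witness_Qd.
Proof.
case: q => [j _|]; last by rewrite inE.
by rewrite /=; case: ifP; rewrite ?inE // => _ /eqP ->.
Qed.

Definition witness_ldba : LDBA letter :=
  {| lstate := option 'I_m; linit := None; ltrans := witness_trans;
     lacc := witness_acc; lQd := witness_Qd; lacc_trans := witness_acc_trans;
     lacc_Qd := witness_acc_Qd; lQd_det := witness_Qd_det;
     lQd_closed := witness_Qd_closed |}.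

Lemma card_witness_ldba : #|lstate witness_ldba| = m.+1.
Proof. by rewrite card_option card_ord. Qed.

Lemma witness_ldba_accepts w : ldba_accepts witness_ldba w <->
  exists j, inf_often w (inr j) /\ fin_often w (inl j).
Proof.
split=> [[r [[r0 r_step] r_acc]] | [j [inf_j [i fin_j]]]].
  have [t _] := r_acc 0; case rt: (r t) => [j|] //= _.
  have stay k : r (t + k) = Some j.
    elim: k => [|k IHk]; first by rewrite addn0.
    have := r_step (t + k); rewrite IHk addnS /= /witness_trans.
    by case: ifP; rewrite ?inE // => _ /eqP.
  have alive k : w (t + k) != inl j.
    by apply: contraTneq (r_step (t + k)) => wk; rewrite stay /= /witness_trans wk eqxx inE.
  exists j; split; last by exists t => s /subnKC <-.
  move=> i; have [s le_s] := r_acc (t + i).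
  have s_eq : s = t + (s - t) by rewrite subnKC // (leq_trans (leq_addr i t)).
  rewrite s_eq stay /= -s_eq => /andP [_ /eqP w_s].
  by exists s => //; apply: leq_trans (leq_addl t i) le_s.
exists (fun t => if t <= i then None else Some j); split.
  split=> // t; case: (leqP t i) => [_ | lt_it] /=; first by rewrite inE.
  rewrite ltnNge (ltnW lt_it) /= /witness_trans (negbTE (fin_j t (ltnW lt_it))).
  by rewrite set11.
move=> k; have [s le_s w_s] := inf_j (maxn k i.+1).
exists s; first by rewrite (leq_trans (leq_maxl k i.+1)).
have lt_is : i < s by rewrite (leq_trans (leq_maxr k i.+1)).
by rewrite leqNgt lt_is ltnNge (ltnW lt_is) /= w_s !eqxx.
Qed.

Lemma witness_ldba_accepts_upword a0 p l : 0 < size l ->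
  ldba_accepts witness_ldba (upword a0 p l) <-> exists j, inr j \in l /\ inl j \notin l.
Proof.
move=> l_neq0; have inf_l := inf_often_upword a0 p l_neq0.
have fin_l := fin_often_upword a0 p l_neq0.
rewrite witness_ldba_accepts.
by split=> -[j [/inf_l inf_j /fin_l fin_j]]; exists j.
Qed.

End WitnessLDBA.

Lemma leq_sum_card_disjoint (I T : finType) (J : {set I}) (F : I -> {set T}) (U : {set T}) :
  {in J, forall i, F i \subset U} ->
  {in J &, forall i j, i != j -> [disjoint F i & F j]} ->
  \sum_(i in J) #|F i| <= #|U|.
Proof.
have [n] := ubnP #|J|; elim: n J U => // n IHn J U lt_J sFU dF.
have [-> | [i Ji]] := set_0Vmem J; first by rewrite big_set0.
rewrite (bigD1 i) //= -(cardsID (F i) U) (setIidPr (sFU i Ji)) leq_add2l.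
rewrite (eq_bigl (mem (J :\ i))) => [|j]; last by rewrite !inE andbC.
apply: IHn.
- by rewrite (cardsD1 i) Ji in lt_J.
- by move=> j /setD1P [ji Jj]; rewrite subsetD sFU //= dF.
- by move=> j k /setD1P [_ Jj] /setD1P [_ Jk]; apply: dF.
Qed.

Section LowerBound.
Variables (m : nat) (D : DPA (letter m)).
Hypothesis D_correct : forall w, ldba_accepts (witness_ldba m) w <-> dpa_accepts D w.

Definition avoiding (K : {set 'I_m}) : {set letter m} := [set a | letter_index a \notin K].

Lemma avoiding_setU1 K i : avoiding (i |: K) \subset avoiding K :\ inl i.
Proof.
apply/subsetP => a; rewrite !inE negb_or => /andP [ia ->]; rewrite andbT.
by case: a ia => //= j; apply: contra_neq => -[].
Qed.

Lemma no_shared_recurrent (K : {set 'I_m}) (i i' : 'I_m) z :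
  connect (dpa_edge D setT) (dinit D) z -> i != i' -> i \notin K -> i' \notin K ->
  recurrent (dpa_edge D (avoiding K :\ inl i)) z ->
  recurrent (dpa_edge D (avoiding K :\ inl i')) z -> False.
Proof.
move=> reach_z neq_ii' Ki Ki' rec_i rec_i'.
have [p _ read_p] := connect_dpa_read reach_z.
have [l1 l1E read_l1] := recurrent_dpa_loop rec_i.
have [l2 l2E read_l2] := recurrent_dpa_loop rec_i'.
have l1_neq0 : 0 < size l1.
  have : inr i \in l1 by rewrite l1E !inE Ki.
  by case: (l1).
have l2_neq0 : 0 < size l2.
  have : inr i' \in l2 by rewrite l2E !inE Ki'.
  by case: (l2).
have accept_loop k l : l =i avoiding K :\ inl k -> k \notin K -> 0 < size l ->
    dpa_accepts D (upword (inl i) p l).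
  move=> lE Kk l_neq0; apply/D_correct/witness_ldba_accepts_upword => //.
  by exists k; rewrite !lE !inE Kk eqxx.
have := dpa_accepts_upword_cat read_p read_l1 read_l2 l1_neq0 l2_neq0
  (accept_loop _ _ l1E Ki l1_neq0) (accept_loop _ _ l2E Ki' l2_neq0).
move/D_correct/witness_ldba_accepts_upword => -[|j []].
  by rewrite size_cat addn_gt0 l1_neq0.
rewrite !mem_cat !l1E !l2E !inE /= orbb => Kj.
rewrite Kj !andbT negb_or !negbK => /andP [/eqP -> /eqP [ii']].
by rewrite ii' eqxx in neq_ii'.
Qed.

Lemma fact_le_card_reach (K : {set 'I_m}) q : connect (dpa_edge D setT) (dinit D) q ->
  #|~: K|`! <= #|[set z | connect (dpa_edge D (avoiding K)) q z]|.
Proof.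
move eK: #|~: K| => r; elim: r K eK q => [|r IHr] K eK q reach_q.
  by apply/card_gt0P; exists q; rewrite inE connect0.
pose B i := avoiding K :\ inl i.
pose x i := odflt q [pick x | connect (dpa_edge D (B i)) q x && recurrent (dpa_edge D (B i)) x].
have x_spec i : connect (dpa_edge D (B i)) q (x i) && recurrent (dpa_edge D (B i)) (x i).
  rewrite /x; case: pickP => // none.
  by have [y] := exists_recurrent (dpa_edge D (B i)) q; rewrite none.
pose Z i := [set z | connect (dpa_edge D (avoiding (i |: K))) (x i) z].
have Z_rec i z : z \in Z i ->
    connect (dpa_edge D (B i)) q z /\ recurrent (dpa_edge D (B i)) z.
  rewrite inE => /(connect_dpa_edge_sub (avoiding_setU1 K i)) xz.
  have /andP [qx rec_x] := x_spec i.
  by split; [apply: connect_trans qx xz | apply: recurrent_connect rec_x xz].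
have reach_all i z : connect (dpa_edge D (B i)) q z -> connect (dpa_edge D setT) (dinit D) z.
  by move=> /(connect_dpa_edge_sub (subsetT _)); apply: connect_trans reach_q.
apply: leq_trans (leq_sum_card_disjoint (J := ~: K) (F := Z) _ _); first last.
- move=> i j Ki Kj ij; rewrite -setI_eq0; apply/eqP/setP => z; rewrite in_setI in_set0.
  apply/negP => /andP [/Z_rec [qz rec_i] /Z_rec [_ rec_j]].
  rewrite !inE in Ki Kj.
  exact: no_shared_recurrent (reach_all _ _ qz) ij Ki Kj rec_i rec_j.
- move=> i _; apply/subsetP => z /Z_rec [qz _]; rewrite inE.
  exact: connect_dpa_edge_sub (subsetDl _ _) qz.
rewrite factS -eK -sum_nat_const; apply: leq_sum => i Ki.
have /andP [qx _] := x_spec i; apply: IHr; last exact: reach_all qx.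
by rewrite setCU setIC -setDE; move: eK; rewrite (cardsD1 i) Ki => -[].
Qed.

Lemma fact_le_card_dpa : m`! <= #|dstate D|.
Proof.
have := fact_le_card_reach set0 (connect0 _ (dinit D)).
by rewrite setC0 cardsT card_ord => /leq_trans; apply; apply: max_card.
Qed.

End LowerBound.

Lemma exp_le_fact_sqr n : n ^ n <= n`! ^ 2.
Proof.
(* Pair the factor i + 1 of n! with the factor n - i of n!: their product is >= n. *)
have fact_rev : \prod_(i < n) (n - i) = n`!.
  rewrite fact_prod big_add1 big_mkord (reindex_inj rev_ord_inj) /=.
  by apply: eq_bigr => i _; rewrite subKn.
rewrite expnS expn1 {1}fact_prod big_add1 big_mkord -{1}fact_rev -big_split /=.
rewrite -[in n ^ n](card_ord n) -prod_nat_const.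
by rewrite card_ord; apply: leq_prod => i _; have := ltn_ord i; nia.
Qed.

Lemma leq_fact n : 3 <= n -> n.+1 <= n`!.
Proof.
elim: n => // n IHn; rewrite leq_eqVlt => /predU1P [<- // | lt3n].
by rewrite factS (leq_trans _ (leq_mul (leqnn n.+1) (IHn lt3n))) //; nia.
Qed.

Lemma exp_le_fact4 n : 3 <= n -> n.+1 ^ n.+1 <= n`! ^ 4.
Proof.
move=> le3n; apply: leq_trans (exp_le_fact_sqr n.+1) _.
rewrite factS expnMn (_ : 4 = 2 + 2) // expnD leq_mul2r.
by rewrite leq_exp2r ?leq_fact ?orbT.
Qed.

Theorem mainTheorem6 (T : translation) (HT : correct_translation T) :
  exists k : nat, 0 < k /\
  exists N : nat, forall n : nat, N <= n ->
    exists (Sigma : finType) (A : LDBA Sigma),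
      #|lstate A| = n /\ n ^ n <= #|dstate (T Sigma A)| ^ k.
Proof.
exists 4; split => //; exists 4 => -[|m] // le3m.
exists (letter m), (witness_ldba m); split; first exact: card_witness_ldba.
apply: leq_trans (exp_le_fact4 le3m) _; rewrite leq_exp2r //.
exact: fact_le_card_dpa (HT (letter m) (witness_ldba m)).
Qed.
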